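(* Let $\pi_0\neq\pi_1$ be two primes. Then there exist uncountably many irrational real numbers $x$ with the following property: if $(q_s)_{s\ge0}$ denotes the sequence of denominators of the convergents of $x$, then for every $s\ge0$, $q_{2s}$ is a power of $\pi_0$ and $q_{2s+1}$ is a power of $\pi_1$ (with exponent $\ge1$ for $s\ge1$ resp. $s\ge0$). In particular, each $q_s$ with $s\ge1$ is divisible only by primes in $\{\pi_0,\pi_1\}$.
   Context: For an irrational $x$ with continued fraction expansion $[a_0;a_1,a_2,\dots]$, the convergents are $p_s/q_s$. They are defined by $p_{-1}=1$, $p_0=a_0$, $q_{-1}=0$, $q_0=1$, and for $s\ge1$, $p_s=a_sp_{s-1}+p_{s-2}$ and $q_s=a_sq_{s-1}+q_{s-2}$. *)

From Stdlib Require Import Reals ZArith Znumtheory.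
Open Scope R_scope.

Definition irrational (x : R) : Prop :=
  forall (p q : Z), q <> 0%Z -> x <> IZR p / IZR q.

(* Complete quotients: x_0 = x, x_{n+1} = 1 / (x_n - floor x_n).
   Int_part is the floor function (Int_part x = up x - 1). *)
Fixpoint cf_rem (x : R) (n : nat) : R :=
  match n with
  | O => x
  | S m => / frac_part (cf_rem x m)
  end.

Definition cf_a (x : R) (n : nat) : Z := Int_part (cf_rem x n).

(* Pairs (q_{n-1}, q_n) with q_{-1} = 0, q_0 = 1,
   q_n = a_n q_{n-1} + q_{n-2}. *)
Fixpoint cf_qpair (x : R) (n : nat) : Z * Z :=
  match n with
  | O => (0%Z, 1%Z)
  | S m => let (qa, qb) := cf_qpair x m in
           (qb, (cf_a x (S m) * qb + qa)%Z)
  end.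

Definition cf_q (x : R) (n : nat) : Z := snd (cf_qpair x n).

Definition alt_prime_power_denoms (p0 p1 : Z) (x : R) : Prop :=
  (forall s : nat, exists k : nat,
      ((s >= 1)%nat -> (k >= 1)%nat) /\ cf_q x (2 * s) = (p0 ^ Z.of_nat k)%Z) /\
  (forall s : nat, exists k : nat,
      (k >= 1)%nat /\ cf_q x (2 * s + 1) = (p1 ^ Z.of_nat k)%Z).

From Stdlib Require Import Reals ZArith Znumtheory Zpow_facts Lia Lra.
From mathcomp Require ssreflect ssrfun ssrbool eqtype ssrnat div prime cyclic zify.
Open Scope R_scope.

(* Proof strategy.  Given primes p0 <> p1 and any sequence f of reals, we
   build an x with the required denominators that differs from every f n.

   1. Realization: every integer sequence a_0, a_1, ... with a_n >= 1 for
      n >= 1 is the partial-quotient sequence cf_a x of an irrational x.  The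
      truncated continued fractions of the tails give nested intervals, whose
      common point exists by completeness of R and is irrational by a
      Euclidean descent on denominators.
   2. Denominators: q_(n+1) must equal a_(n+1) q_n + q_(n-1) with a_(n+1) >= 1,
      i.e. q_(n+1) > q_(n-1) and q_(n+1) = q_(n-1) mod q_n.  If q_(n-1) is a
      power of a prime r and q_n a power of the other prime, Euler's theorem
      gives r^phi(q_n) = 1 mod q_n, so both q_(n-1) r^phi(q_n) and
      q_(n-1) r^(2 phi(q_n)) are admissible and yield distinct a_(n+1).
   3. Diagonalization: at step n + 2 we pick the candidate whose partial
      quotient differs from cf_a (f n) (n + 2), so x <> f n. *)

Lemma Int_part_eq (y : R) (k : Z) : IZR k < y < IZR k + 1 -> Int_part y = k.
Proof.
  intros [hlo hhi]. unfold Int_part.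
  assert (up y = (k + 1)%Z) by (symmetry; apply tech_up; rewrite plus_IZR; lra).
  lia.
Qed.

Section Realization.
Variable a : nat -> Z.
Hypothesis a_pos : forall n, (1 <= n)%nat -> (1 <= a n)%Z.

(* cf_bounds n m holds the finite continued fractions [a_n; ..., a_(n+m)]
   and [a_n; ..., a_(n+m) + 1], the smaller one first (which one is smaller
   depends on the parity of m): every real whose expansion starts with
   a_n, ..., a_(n+m) lies between them. *)
Fixpoint cf_bounds (n m : nat) : R * R :=
  match m with
  | O => (IZR (a n), IZR (a n) + 1)
  | S m' => let (l, u) := cf_bounds (S n) m' in (IZR (a n) + / u, IZR (a n) + / l)
  end.
Definition cf_lo (n m : nat) : R := fst (cf_bounds n m).
Definition cf_hi (n m : nat) : R := snd (cf_bounds n m).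

Lemma cf_lo_S n m : cf_lo n (S m) = IZR (a n) + / cf_hi (S n) m.
Proof. unfold cf_lo, cf_hi; simpl; destruct (cf_bounds (S n) m); reflexivity. Qed.
Lemma cf_hi_S n m : cf_hi n (S m) = IZR (a n) + / cf_lo (S n) m.
Proof. unfold cf_lo, cf_hi; simpl; destruct (cf_bounds (S n) m); reflexivity. Qed.

Lemma a_pos_R n : 1 <= IZR (a (S n)).
Proof. apply IZR_le, a_pos; lia. Qed.

Lemma inv_in_unit (y : R) : 1 <= y -> 0 < / y <= 1.
Proof.
  intros hy. split; [apply Rinv_0_lt_compat; lra|].
  rewrite <- Rinv_1. apply Rinv_le_contravar; lra.
Qed.

Lemma cf_bounds_range m : forall n,
  IZR (a n) <= cf_lo n m <= IZR (a n) + 1 /\ IZR (a n) <= cf_hi n m <= IZR (a n) + 1.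
Proof.
  induction m as [|m IH]; intros n; [unfold cf_lo, cf_hi; simpl; lra|].
  rewrite cf_lo_S, cf_hi_S.
  destruct (IH (S n)) as [hl hh]. pose proof (a_pos_R n).
  pose proof (inv_in_unit (cf_lo (S n) m)). pose proof (inv_in_unit (cf_hi (S n) m)).
  lra.
Qed.

Lemma cf_bounds_ge1 n m : 1 <= cf_lo (S n) m /\ 1 <= cf_hi (S n) m.
Proof. destruct (cf_bounds_range m (S n)). pose proof (a_pos_R n). lra. Qed.

(* The two inequalities are
   proved together since each one feeds the other one level deeper. *)
Lemma cf_lo_le_hi k : forall n m, cf_lo n k <= cf_hi n m /\ cf_lo n m <= cf_hi n k.
Proof.
  induction k as [|k IH]; intros n m.
  - destruct (cf_bounds_range m n). destruct (cf_bounds_range 0 n). unfold cf_lo, cf_hi in *.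
    simpl in *. lra.
  - destruct m as [|m].
    + destruct (cf_bounds_range (S k) n). unfold cf_lo at 2, cf_hi at 1. simpl. lra.
    + rewrite !cf_lo_S, !cf_hi_S. destruct (IH (S n) m) as [h1 h2].
      destruct (cf_bounds_ge1 n k), (cf_bounds_ge1 n m).
      split; apply Rplus_le_compat_l, Rinv_le_contravar; lra.
Qed.

Definition in_all_bounds (n : nat) (y : R) : Prop := forall m, cf_lo n m <= y <= cf_hi n m.

Lemma in_all_bounds_shift n y : in_all_bounds n y ->
  IZR (a n) < y < IZR (a n) + 1 /\ in_all_bounds (S n) (/ (y - IZR (a n))).
Proof.
  intros hy. pose proof (a_pos_R n). pose proof (a_pos_R (S n)).
  assert (hlo : IZR (a n) < y).
  { destruct (hy 1%nat) as [h _]. rewrite cf_lo_S in h. unfold cf_hi in h. simpl in h.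
    pose proof (inv_in_unit (IZR (a (S n)) + 1) ltac:(lra)). lra. }
  assert (hhi : y < IZR (a n) + 1).
  { destruct (hy 2%nat) as [_ h]. rewrite cf_hi_S, cf_lo_S in h. unfold cf_hi in h. simpl in h.
    pose proof (inv_in_unit (IZR (a (S (S n))) + 1) ltac:(lra)).
    assert (/ (IZR (a (S n)) + / (IZR (a (S (S n))) + 1)) < 1).
    { rewrite <- Rinv_1 at 2. apply Rinv_1_lt_contravar; lra. }
    lra. }
  split; [lra|]. intros m. destruct (hy (S m)) as [h1 h2].
  rewrite cf_lo_S in h1. rewrite cf_hi_S in h2. destruct (cf_bounds_ge1 n m).
  split.
  - rewrite <- (Rinv_inv (cf_lo (S n) m)). apply Rinv_le_contravar; lra.
  - rewrite <- (Rinv_inv (cf_hi (S n) m)).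
    apply Rinv_le_contravar; [apply Rinv_0_lt_compat|]; lra.
Qed.

Lemma exists_in_all_bounds : exists x, in_all_bounds 0 x.
Proof.
  set (E := fun y => exists m, y = cf_lo 0 m).
  assert (hbound : bound E) by (exists (cf_hi 0 0); intros y [m ->]; apply (cf_lo_le_hi m 0 0)).
  assert (hne : exists y, E y) by (exists (cf_lo 0 0); exists 0%nat; reflexivity).
  destruct (completeness E hbound hne) as [x [hub hlub]].
  exists x. intros m. split.
  - apply hub. exists m; reflexivity.
  - apply hlub. intros y [k ->]. apply (cf_lo_le_hi k 0 m).
Qed.

Lemma cf_rem_in_bounds x : in_all_bounds 0 x ->
  forall n, in_all_bounds n (cf_rem x n) /\ cf_a x n = a n.
Proof.
  intros hx n. induction n as [|n [hin ha]].
  - split; [exact hx|]. apply Int_part_eq, (in_all_bounds_shift 0 x hx).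
  - assert (hrem : in_all_bounds (S n) (cf_rem x (S n))).
    { simpl. unfold frac_part. fold (cf_a x n). rewrite ha.
      exact (proj2 (in_all_bounds_shift n _ hin)). }
    split; [exact hrem|]. apply Int_part_eq, (in_all_bounds_shift _ _ hrem).
Qed.

(* No rational p/q lies in all the intervals: otherwise q/(p - a_n q) would,
   with the strictly smaller positive denominator p - a_n q. *)
Lemma no_rational_in_bounds N : forall n p q, (0 < q)%Z -> (Z.to_nat q <= N)%nat ->
  ~ in_all_bounds n (IZR p / IZR q).
Proof.
  induction N as [|N IH]; intros n p q hq hN hin; [lia|].
  destruct (in_all_bounds_shift _ _ hin) as [[hlo hhi] hnext].
  assert (hQ : 0 < IZR q) by (apply IZR_lt; exact hq).
  assert (hlo' : (a n * q < p)%Z).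
  { apply lt_IZR. rewrite mult_IZR.
    apply (Rmult_lt_compat_r (IZR q)) in hlo; [|exact hQ]. field_simplify in hlo; lra. }
  assert (hhi' : (p < (a n + 1) * q)%Z).
  { apply lt_IZR. rewrite mult_IZR, plus_IZR.
    apply (Rmult_lt_compat_r (IZR q)) in hhi; [|exact hQ]. field_simplify in hhi; lra. }
  apply (IH (S n) q (p - a n * q)%Z); [lia|lia|].
  replace (IZR q / IZR (p - a n * q)) with (/ (IZR p / IZR q - IZR (a n))); [exact hnext|].
  assert (IZR (p - a n * q) <> 0) by (apply not_0_IZR; lia).
  rewrite minus_IZR, mult_IZR in *. field. lra.
Qed.

Theorem cf_realization : exists x, irrational x /\ forall n, cf_a x n = a n.
Proof.
  destruct exists_in_all_bounds as [x hx]. exists x.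
  split; [|intros n; exact (proj2 (cf_rem_in_bounds x hx n))].
  intros p q hq E. rewrite E in hx.
  destruct (Z_lt_le_dec 0 q) as [hpos|hneg].
  - exact (no_rational_in_bounds _ 0 p q hpos (le_n _) hx).
  - apply (no_rational_in_bounds (Z.to_nat (- q)) 0 (- p) (- q)); [lia|lia|].
    replace (IZR (- p) / IZR (- q)) with (IZR p / IZR q); [exact hx|].
    rewrite !opp_IZR. field. apply not_0_IZR; exact hq.
Qed.

End Realization.

Module EulerZ.
Import ssreflect ssrfun ssrbool eqtype ssrnat div prime cyclic zify.

Definition totientZ (q : Z) : Z := Z.of_nat (totient (Z.to_nat q)).

Lemma gcdn_Z (m n : nat) : Z.of_nat (gcdn m n) = Z.gcd (Z.of_nat m) (Z.of_nat n).
Proof. lia. Qed.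

Lemma expn_Z (m n : nat) : Z.of_nat (m ^ n) = (Z.of_nat m ^ Z.of_nat n)%Z.
Proof. lia. Qed.

Lemma euler_Z (r q : Z) : (0 < r)%Z -> (0 < q)%Z -> rel_prime r q ->
  (1 <= totientZ q)%Z /\ (q | r ^ totientZ q - 1)%Z.
Proof.
move=> r_gt0 q_gt0 /Zgcd_1_rel_prime rq_coprime.
have co : coprime (Z.to_nat r) (Z.to_nat q).
  by apply/eqP; apply: Nat2Z.inj; rewrite gcdn_Z !Z2Nat.id; lia.
have tot_gt0 : (0 < totient (Z.to_nat q))%N by rewrite totient_gt0; lia.
have /eqP := Euler_exp_totient co.
rewrite eqn_mod_dvd ?expn_gt0; last by apply/orP; left; lia.
move=> /dvdnP [k hk]; split; first by rewrite /totientZ; lia.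
exists (Z.of_nat k).
have pow_gt0 : (0 < Z.to_nat r ^ totient (Z.to_nat q))%N by rewrite expn_gt0; apply/orP; left; lia.
have := congr1 Z.of_nat hk.
rewrite Nat2Z.inj_sub ?Nat2Z.inj_mul ?expn_Z ?Z2Nat.id /totientZ; lia.
Qed.

End EulerZ.
Import EulerZ.

Section NextDenominator.
Local Open Scope Z_scope.

Lemma quotient_of_congruent (qa qb c : Z) : 0 < qb -> (qb | c - qa) -> qa < c ->
  c = (c - qa) / qb * qb + qa /\ 1 <= (c - qa) / qb.
Proof. intros hqb [k hk] hlt. rewrite hk, Z.div_mul by lia. nia. Qed.

(* Two candidates are available, qa r^e and
   qa r^(2e); the second is used when the first would produce the partial
   quotient T, which is thereby avoided. *)
Definition next_denom (qa qb r e T : Z) : Z :=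
  let c := qa * r ^ e in
  if Z.eq_dec ((c - qa) / qb) T then qa * r ^ (2 * e) else c.

Lemma next_denom_spec (qa qb r e T : Z) : 0 < qa -> 0 < qb -> 2 <= r -> 1 <= e ->
  (qb | r ^ e - 1) ->
  let c := next_denom qa qb r e T in
  (exists s, 1 <= s /\ c = qa * r ^ s) /\ (qb | c - qa) /\ qa < c /\ (c - qa) / qb <> T.
Proof.
  intros hqa hqb hr he hdiv c.
  assert (hre : 1 < r ^ e) by (apply Z.pow_gt_1; lia).
  assert (hsq : r ^ (2 * e) = r ^ e * r ^ e)
    by (replace (2 * e) with (e + e) by lia; apply Z.pow_add_r; lia).
  assert (hdiv2 : (qb | r ^ (2 * e) - 1)).
  { rewrite hsq. replace (r ^ e * r ^ e - 1) with ((r ^ e - 1) * (r ^ e + 1)) by ring.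
    apply Z.divide_mul_l, hdiv. }
  assert (hcong : forall d, (qb | r ^ d - 1) -> (qb | qa * r ^ d - qa)).
  { intros d hd. replace (qa * r ^ d - qa) with (qa * (r ^ d - 1)) by ring.
    apply Z.divide_mul_r, hd. }
  assert (hgt1 : qa < qa * r ^ e) by nia.
  assert (hgt2 : qa * r ^ e < qa * r ^ (2 * e)) by (rewrite hsq; nia).
  unfold c, next_denom. destruct (Z.eq_dec _ T) as [hT|hT].
  - split; [exists (2 * e); split; [lia|reflexivity]|].
    split; [apply hcong, hdiv2|]. split; [lia|].
    (* exact quotients grow with c, so the second quotient exceeds T *)
    destruct (quotient_of_congruent qa qb _ hqb (hcong _ hdiv) hgt1) as [h1 _].
    destruct (quotient_of_congruent qa qb _ hqb (hcong _ hdiv2) ltac:(lia)) as [h2 _].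
    intros hT2. rewrite hT in h1. rewrite hT2 in h2. nia.
  - split; [exists e; split; [lia|reflexivity]|]. split; [apply hcong, hdiv|]. split; lia.
Qed.

End NextDenominator.

Section Construction.
Local Open Scope Z_scope.
Variables (p0 p1 : Z) (f : nat -> R).
Hypotheses (hp0 : prime p0) (hp1 : prime p1) (hne : p0 <> p1).

Definition base (n : nat) : Z := if Nat.even n then p0 else p1.

(* denoms n = (q_(n-1), q_n): q_(-1) = 0, q_0 = 1, q_1 = p1, and for n >= 1,
   q_(n+1) = next_denom q_(n-1) q_n, forbidding the partial quotient that
   the real number f (n - 1) has at position n + 1. *)
Fixpoint denoms (n : nat) : Z * Z :=
  match n with
  | O => (0, 1)
  | S m =>
      let (qa, qb) := denoms m in
      (qb, match m with
           | O => p1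
           | S k => next_denom qa qb (base n) (totientZ qb) (cf_a (f k) n)
           end)
  end.

Definition quotients (n : nat) : Z :=
  match n with
  | O => 0
  | S m => (snd (denoms n) - fst (denoms m)) / snd (denoms m)
  end.

Lemma denoms_fst n : fst (denoms (S n)) = snd (denoms n).
Proof. simpl. destruct (denoms n); reflexivity. Qed.

Lemma base_prime n : prime (base n).
Proof. unfold base; destruct (Nat.even n); assumption. Qed.

Lemma base_pow_pos n j : 0 <= j -> 0 < base n ^ j.
Proof. intros hj. pose proof (prime_ge_2 _ (base_prime n)). apply Z.pow_pos_nonneg; lia. Qed.

Lemma base_succ_ne n : base (S n) <> base n.
Proof.
  unfold base. rewrite Nat.even_succ, <- Nat.negb_even.
  destruct (Nat.even n); simpl; auto.
Qed.

Lemma base_even s : base (2 * s)%nat = p0.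
Proof. unfold base. rewrite Nat.even_mul. reflexivity. Qed.

Lemma base_odd s : base (2 * s + 1)%nat = p1.
Proof.
  unfold base. replace (2 * s + 1)%nat with (S (2 * s)) by lia.
  rewrite Nat.even_succ, Nat.odd_mul. reflexivity.
Qed.

(* Consecutive bases are distinct primes, hence coprime. *)
Lemma base_coprime_pow n j : 0 <= j -> rel_prime (base (S n)) (base n ^ j).
Proof.
  intros hj. apply rel_prime_Zpower_r; [exact hj|].
  apply prime_rel_prime; [apply base_prime|].
  intros hd. apply (base_succ_ne n), prime_div_prime; auto using base_prime.
Qed.

(* The invariant: q_(n-1) is a power of base (n - 1) = base (n + 1) and q_n a
   nontrivial power of base n. *)
Definition alt_powers (n : nat) : Prop :=
  exists i j, 0 <= i /\ 1 <= j /\ denoms n = (base (S n) ^ i, base n ^ j).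

Lemma denoms_step k : alt_powers (S k) ->
  alt_powers (S (S k)) /\
  (snd (denoms (S k)) | snd (denoms (S (S k))) - fst (denoms (S k))) /\
  fst (denoms (S k)) < snd (denoms (S (S k))) /\
  quotients (S (S k)) <> cf_a (f k) (S (S k)).
Proof.
  intros [i [j [hi [hj hden]]]].
  assert (hr : 2 <= base (S (S k))) by apply prime_ge_2, base_prime.
  pose proof (base_pow_pos (S k) j ltac:(lia)) as hqb.
  pose proof (base_pow_pos (S (S k)) i hi) as hqa.
  destruct (euler_Z (base (S (S k))) (base (S k) ^ j) ltac:(lia) hqb
              (base_coprime_pow (S k) j ltac:(lia))) as [he hdiv].
  destruct (next_denom_spec _ _ _ _ (cf_a (f k) (S (S k))) hqa hqb hr he hdiv)
    as [[s [hs hc]] hrest].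
  assert (hnext : denoms (S (S k)) = (base (S k) ^ j,
            next_denom (base (S (S k)) ^ i) (base (S k) ^ j) (base (S (S k)))
              (totientZ (base (S k) ^ j)) (cf_a (f k) (S (S k))))).
  { change (denoms (S (S k))) with (let (qa, qb) := denoms (S k) in
      (qb, next_denom qa qb (base (S (S k))) (totientZ qb) (cf_a (f k) (S (S k))))).
    rewrite hden. reflexivity. }
  unfold quotients. rewrite hnext, hden. simpl fst. simpl snd.
  split; [|exact hrest].
  exists j, (i + s). split; [lia|]. split; [lia|].
  rewrite hnext, hc, Z.pow_add_r by lia. reflexivity.
Qed.

Lemma alt_powers_all n : (1 <= n)%nat -> alt_powers n.
Proof.
  induction n as [|[|k] IH]; intros hn; [lia| |].
  - exists 0, 1. split; [lia|]. split; [lia|]. rewrite Z.pow_0_r, Z.pow_1_r. reflexivity.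
  - exact (proj1 (denoms_step k (IH ltac:(lia)))).
Qed.

Lemma denoms_prime_power n : (1 <= n)%nat -> exists j, 1 <= j /\ snd (denoms n) = base n ^ j.
Proof. intros hn. destruct (alt_powers_all n hn) as [i [j [_ [hj ->]]]]. exists j. auto. Qed.

Lemma denoms_pos n : 0 < snd (denoms n).
Proof.
  destruct n as [|n]; [simpl; lia|].
  destruct (denoms_prime_power (S n) ltac:(lia)) as [j [hj ->]].
  apply base_pow_pos; lia.
Qed.

Lemma denoms_recurrence n :
  snd (denoms (S n)) = quotients (S n) * snd (denoms n) + fst (denoms n) /\
  1 <= quotients (S n).
Proof.
  destruct n as [|k].
  - simpl. rewrite Z.div_1_r. pose proof (prime_ge_2 _ hp1). split; lia.
  - destruct (denoms_step k (alt_powers_all (S k) ltac:(lia))) as [_ [hdiv [hlt _]]].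
    exact (quotient_of_congruent _ _ _ (denoms_pos (S k)) hdiv hlt).
Qed.

Lemma quotients_pos n : (1 <= n)%nat -> 1 <= quotients n.
Proof. intros hn. destruct n as [|n]; [lia|]. apply (denoms_recurrence n). Qed.

Lemma quotients_avoid n : quotients (S (S n)) <> cf_a (f n) (S (S n)).
Proof. exact (proj2 (proj2 (proj2 (denoms_step n (alt_powers_all (S n) ltac:(lia)))))). Qed.

Lemma cf_qpair_denoms x : (forall n, cf_a x n = quotients n) ->
  forall n, cf_qpair x n = denoms n.
Proof.
  intros hx n. induction n as [|n IH]; [reflexivity|].
  simpl cf_qpair. rewrite IH, hx.
  rewrite (surjective_pairing (denoms (S n))), denoms_fst, (proj1 (denoms_recurrence n)).
  destruct (denoms n); reflexivity.
Qed.

End Construction.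

Theorem mainTheorem8 (p0 p1 : Z) (hp0 : prime p0) (hp1 : prime p1)
    (hne : p0 <> p1) :
  forall f : nat -> R,
    exists x : R,
      irrational x /\ alt_prime_power_denoms p0 p1 x /\
      (forall s : nat, (s >= 1)%nat ->
         forall r : Z, prime r -> (r | cf_q x s)%Z -> r = p0 \/ r = p1) /\
      (forall n : nat, f n <> x).
Proof.
  intros f.
  destruct (cf_realization (quotients p0 p1 f) (quotients_pos p0 p1 f hp0 hp1 hne))
    as [x [hirr hx]].
  assert (hq : forall n, cf_q x n = snd (denoms p0 p1 f n)).
  { intros n. unfold cf_q. rewrite (cf_qpair_denoms p0 p1 f hp0 hp1 hne x hx). reflexivity. }
  assert (hpow : forall n, (1 <= n)%nat ->
            exists k : nat, (k >= 1)%nat /\ cf_q x n = (base p0 p1 n ^ Z.of_nat k)%Z).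
  { intros n hn. destruct (denoms_prime_power p0 p1 f hp0 hp1 hne n hn) as [j [hj e]].
    exists (Z.to_nat j). rewrite hq, e, Z2Nat.id by lia. split; [lia|reflexivity]. }
  exists x. split; [exact hirr|]. split; [split|split].
  - intros [|s]; [exists 0%nat; rewrite hq; split; [lia|reflexivity]|].
    destruct (hpow (2 * S s)%nat ltac:(lia)) as [k [hk e]].
    exists k. rewrite e, base_even. auto.
  - intros s. rewrite <- (base_odd p0 p1 s). apply hpow. lia.
  - intros s hs r hr hd. destruct (hpow s hs) as [k [_ e]]. rewrite e in hd.
    assert (hrb : r = base p0 p1 s).
    { exact (prime_power_prime _ _ _ (Nat2Z.is_nonneg k) hr (base_prime p0 p1 hp0 hp1 s) hd). }
    unfold base in hrb. destruct (Nat.even s); auto.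
  - intros n hfx. apply (quotients_avoid p0 p1 f hp0 hp1 hne n).
    rewrite <- hx, hfx. reflexivity.
Qed.
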